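(* Let $G$ be a connected bipartite graph with bipartition $(U,V)$, $|U|\ge|V|$. Let $V_W\subseteq V$ be the set of vertices of $V$ adjacent to a leaf, $\overline{V_W}=V\setminus V_W$, $U_L\subseteq U$ a set of leaves such that each $v\in V_W$ is adjacent to exactly one element of $U_L$ and $|U_L|=|V_W|$, and $\overline{U_L}=U\setminus U_L$. For $S\subseteq\overline{U_L}$ and $j\ge 1$ let $g_j(S)$ be the number of independent sets $\mathcal C$ of $G$ with $|\mathcal C|=j$ and $\mathcal C\cap\overline{U_L}=S$, and $g(S)=\sum_{j=1}^{\alpha(G)}(-1)^{j-1}g_j(S)$. Suppose $\overline{V_W}=\emptyset$. Then $g(S)=0$ for every nonempty $S\subseteq\overline{U_L}$, and $g(\emptyset)=0$ if $|V|$ is even, $g(\emptyset)=2$ if $|V|$ is odd.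
   Context: A leaf is a vertex with exactly one neighbor. An independent set is a set of pairwise non-adjacent vertices; $\alpha(G)$ is the maximum size of one. *)

From mathcomp Require Import all_boot all_order all_algebra.
Set Implicit Arguments. Unset Strict Implicit. Unset Printing Implicit Defensive.
Import GRing.Theory Num.Theory.

(* A simple graph on a finite vertex type T is a symmetric irreflexive
   relation e : rel T. *)
Section Graph.
Variables (T : finType) (e : rel T).

Definition leaf (x : T) : bool := #|[set y | e x y]| == 1.

Definition independent (C : {set T}) : bool :=
  [forall x in C, forall y in C, ~~ e x y].

Definition alpha : nat := \max_(C : {set T} | independent C) #|C|.

Definition VW (V : {set T}) : {set T} :=
  [set v in V | [exists u, e v u && leaf u]].

Definition gj (Ubar S : {set T}) (j : nat) : nat :=
  #|[set C : {set T} | independent C && (#|C| == j) && (C :&: Ubar == S)]|.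

Definition g (Ubar S : {set T}) : int :=
  (\sum_(1 <= j < alpha.+1) (-1) ^+ (j.-1) *+ gj Ubar S j)%R.

End Graph.

(* Write g(S) = [S = set0] - sum of (-1)^|C| over the independent sets C with
   C :&: Ubar = S.  Every v in V has a pendant neighbour l v in U_L, which lies
   outside V and Ubar.  Toggling l v, for v picked canonically in V :\: C (a set
   the toggle does not change), is therefore a sign-reversing involution of these
   independent sets that preserves C :&: Ubar.  Its fixed points contain V, and V
   is independent and dominating in the connected bipartite graph, so the only
   one is C = V, with V :&: Ubar = set0.  The signed sum is thus
   [S = set0] (-1)^|V|. *)

From mathcomp Require Import all_boot all_order all_algebra.
Set Implicit Arguments. Unset Strict Implicit. Unset Printing Implicit Defensive.
Import GRing.Theory Num.Theory.

Section SignReversingInvolution.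
Local Open Scope ring_scope.

Lemma sum_sign_reversing_involution (R : numDomainType) (I : finType)
    (P : pred I) (F : I -> R) (f : I -> I) :
  involutive f -> (forall i, P i -> P (f i)) ->
  (forall i, P i -> f i != i -> F (f i) = - F i) ->
  \sum_(i | P i) F i = \sum_(i | P i && (f i == i)) F i.
Proof.
move=> fK Pf FfN; rewrite (bigID (fun i => f i == i)) /= addrC.
set X := (X in X + _); suff /eqP -> : X == 0 by rewrite add0r.
have Q_f i : (P (f i) && (f (f i) != f i)) = (P i && (f i != i)).
  apply/andP/andP => [[Pfi nfi] | [Pi nfi]]; last by rewrite Pf // fK eq_sym.
  by rewrite -[i]fK Pf // fK eq_sym.
rewrite -eqNr {2}/X (reindex_inj (inv_inj fK)) /= (eq_bigl _ _ Q_f) -sumrN.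
by apply/eqP/eq_bigr => i /andP[Pi nfi]; rewrite FfN.
Qed.

End SignReversingInvolution.

Section Toggle.
Variable T : finType.

Definition toggle (x : T) (C : {set T}) : {set T} :=
  if x \in C then C :\ x else x |: C.

Lemma in_toggle x C y : (y \in toggle x C) = (y == x) (+) (y \in C).
Proof.
by rewrite /toggle; case: ifP => xC; rewrite !inE; case: eqP => [->|]; rewrite ?xC.
Qed.

Lemma toggleK x : involutive (toggle x).
Proof. by move=> C; apply/setP => y; rewrite !in_toggle addbA addbb. Qed.

Lemma toggle_id x C y : y != x -> (y \in toggle x C) = (y \in C).
Proof. by rewrite in_toggle => /negbTE ->. Qed.

Lemma sign_card_toggle (R : ringType) x C :
  ((-1) ^+ #|toggle x C| = - (-1) ^+ #|C| :> R)%R.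
Proof.
rewrite /toggle; case: ifP => xC; last by rewrite cardsU1 xC exprS mulN1r.
by rewrite [in RHS](cardsD1 x C) xC exprS mulN1r opprK.
Qed.

End Toggle.

Section IndependentSets.
Variables (T : finType) (e : rel T).
Local Open Scope ring_scope.

Lemma independentP (C : {set T}) :
  reflect (forall x y, x \in C -> y \in C -> ~~ e x y) (independent e C).
Proof.
apply: (iffP forall_inP) => [indC x y xC yC | indC x xC].
  by move/forall_inP: (indC x xC); apply.
by apply/forall_inP => y yC; apply: indC.
Qed.

Lemma independent0 : independent e set0.
Proof. by apply/independentP => x y; rewrite inE. Qed.

Definition indep_sign_sum (W S : {set T}) : int :=
  \sum_(C : {set T} | independent e C && (C :&: W == S)) (-1) ^+ #|C|.

Lemma g_sign_sum_nonempty W S :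
  g e W S = - \sum_(C : {set T} | independent e C && (C :&: W == S) && (C != set0))
                 (-1) ^+ #|C|.
Proof.
(* Split g_j by cardinality and exchange the sums: the sum over j then keeps
   only j = #|C|, which lies in [1, alpha] exactly when C is nonempty. *)
rewrite /g -sumrN.
have gjE j : (-1) ^+ j.-1 *+ gj e W S j =
    \sum_(C : {set T} | independent e C && (C :&: W == S))
      (if #|C| == j then (-1) ^+ #|C|.-1 else 0) :> int.
  rewrite -big_mkcondr /gj -sumr_const; apply: eq_big => C.
    by rewrite inE andbAC.
  by rewrite inE => /andP[/andP[_ /eqP ->] _].
under eq_bigr => j _ do rewrite gjE.
rewrite exchange_big [RHS]big_mkcondr /=; apply: eq_bigr => C /andP[indC _].
rewrite -big_mkcondr (eq_bigl _ _ (fun j => eq_sym _ _)) big_nat1_eq.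
have le_alpha : (#|C| <= alpha e)%N.
  exact: (@leq_bigmax_cond _ (independent e) (fun C => #|C|)).
rewrite ltnS le_alpha andbT card_gt0; have [//|C_gt0] := eqVneq C set0.
by rewrite -card_gt0 in C_gt0; rewrite -[in RHS](prednK C_gt0) exprS mulN1r opprK.
Qed.

Lemma g_indep_sign_sum W S : g e W S = (S == set0)%:R - indep_sign_sum W S.
Proof.
rewrite g_sign_sum_nonempty /indep_sign_sum.
rewrite [in RHS](bigID (fun C : {set T} => C == set0)) /=.
have -> : \sum_(C : {set T} | independent e C && (C :&: W == S) && (C == set0))
    (-1) ^+ #|C| = (S == set0)%:R :> int.
  rewrite (eq_bigl (fun C => (S == set0) && (C == set0))) => [|C]; last first.
    by have [->|] := eqVneq C set0; rewrite ?andbF // independent0 set0I eq_sym.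
  by case: (S == set0); [rewrite big_pred1_eq cards0 | rewrite big_pred0].
by rewrite opprD addrA subrr add0r.
Qed.

End IndependentSets.

Section PendantInvolution.
Variables (T : finType) (e : rel T).
Hypotheses (e_sym : symmetric e) (e_irr : irreflexive e).
Variables (V W : {set T}) (l : T -> T).
Hypothesis V_indep : independent e V.
Hypothesis V_dominating : forall x, x \notin V -> exists2 v, v \in V & e x v.
Hypothesis l_adj : {in V, forall v, e v (l v)}.
Hypothesis l_leaf : {in V, forall v, leaf e (l v)}.
Hypothesis l_notin_W : {in V, forall v, l v \notin W}.
Local Open Scope ring_scope.

Lemma pendant_notin_V v : v \in V -> l v \notin V.
Proof.
move=> vV; apply/negP => lvV.
by move/independentP: V_indep => /(_ v (l v) vV lvV); rewrite l_adj.
Qed.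

Lemma pendant_nbr v y : v \in V -> e (l v) y -> y = v.
Proof.
move=> vV lvy; have /cards1P[x nbrE] := l_leaf vV.
have : y \in [set z | e (l v) z] by rewrite inE.
have : v \in [set z | e (l v) z] by rewrite inE e_sym l_adj.
by rewrite nbrE !inE => /eqP -> /eqP.
Qed.

Lemma setD_toggle_pendant v (C : {set T}) :
  v \in V -> V :\: toggle (l v) C = V :\: C.
Proof.
move=> vV; apply/setP => x; rewrite !inE.
have [xV|] := boolP (x \in V); last by rewrite !andbF.
by rewrite toggle_id //; apply: contraNneq (pendant_notin_V vV) => <-.
Qed.

Lemma setI_toggle_pendant v (C : {set T}) :
  v \in V -> toggle (l v) C :&: W = C :&: W.
Proof.
move=> vV; apply/setP => x; rewrite !inE.
have [xW|] := boolP (x \in W); last by rewrite !andbF.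
by rewrite toggle_id //; apply: contraNneq (l_notin_W vV) => <-.
Qed.

Lemma independent_toggle_pendant v (C : {set T}) :
  v \in V -> v \notin C -> independent e C -> independent e (toggle (l v) C).
Proof.
move=> vV vC /independentP indC.
have lv_free z : z \in toggle (l v) C -> ~~ e (l v) z.
  have [-> _|zl] := eqVneq z (l v); first by rewrite e_irr.
  by rewrite toggle_id // => zC; apply: contraNN vC => /(pendant_nbr vV) <-.
apply/independentP => x y xC yC.
have [xl|xl] := eqVneq x (l v); first by rewrite xl lv_free.
have [yl|yl] := eqVneq y (l v); first by rewrite yl e_sym lv_free.
by rewrite toggle_id // in xC; rewrite toggle_id // in yC; apply: indC.
Qed.

Lemma independent_supset_dominating (C : {set T}) :
  independent e C -> V \subset C -> C = V.
Proof.
move=> /independentP indC VC; apply/eqP; rewrite eqEsubset VC andbT.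
apply/subsetP => x xC; apply/negPn/negP => /V_dominating[v vV xv].
by have := indC x v xC (subsetP VC v vV); rewrite xv.
Qed.

Definition pendant_flip (C : {set T}) : {set T} :=
  if [pick v in V :\: C] is Some v then toggle (l v) C else C.

Variant pendant_flip_spec (C : {set T}) : {set T} -> Prop :=
  | PendantFlipFixed of V \subset C : pendant_flip_spec C C
  | PendantFlipToggle v of [pick x in V :\: C] = Some v & v \in V & v \notin C :
      pendant_flip_spec C (toggle (l v) C).

Lemma pendant_flipP C : pendant_flip_spec C (pendant_flip C).
Proof.
rewrite /pendant_flip; case pickC: [pick x in V :\: C] => [v|].
  have : v \in V :\: C by move: pickC; case: pickP => // x + [<-].
  by rewrite inE => /andP[vC vV]; apply: PendantFlipToggle.
apply: PendantFlipFixed; apply/subsetP => x xV; apply/negPn/negP => xC.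
by move: pickC; case: pickP => // /(_ x); rewrite inE xC xV.
Qed.

Lemma pendant_flipK : involutive pendant_flip.
Proof.
move=> C; case: (pendant_flipP C) => [VC|v pickC vV vC].
  by case: (pendant_flipP C) => // v _ vV; rewrite (subsetP VC v vV).
by rewrite /pendant_flip setD_toggle_pendant // pickC toggleK.
Qed.

Lemma pendant_flip_fixed C : (pendant_flip C == C) = (V \subset C).
Proof.
case: pendant_flipP => [->|v _ vV vC]; first by rewrite eqxx.
have -> : (V \subset C) = false by apply: contraNF vC => /subsetP; apply.
apply/negbTE/eqP => /setP/(_ (l v)).
by rewrite in_toggle eqxx; case: (_ \in C).
Qed.

Lemma indep_sign_sum_pendant S :
  indep_sign_sum e W S = (S == V :&: W)%:R * (-1) ^+ #|V|.
Proof.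
rewrite /indep_sign_sum (sum_sign_reversing_involution pendant_flipK); first last.
- move=> C _; case: pendant_flipP => [_|v _ _ _ _]; first by rewrite eqxx.
  exact: sign_card_toggle.
- move=> C /andP[indC /eqP CW]; case: pendant_flipP => [_|v _ vV vC].
    by rewrite indC CW eqxx.
  by rewrite independent_toggle_pendant // setI_toggle_pendant // CW eqxx.
rewrite (eq_bigl (fun C => (S == V :&: W) && (C == V))) => [|C]; last first.
  rewrite pendant_flip_fixed; apply/idP/idP => [/andP[/andP[indC /eqP <-] VC]|].
    by rewrite (independent_supset_dominating indC VC) !eqxx.
  by case/andP=> /eqP -> /eqP ->; rewrite V_indep !eqxx subxx.
by case: (S == _); rewrite ?big_pred1_eq ?mul1r ?big_pred0 ?mul0r.
Qed.

End PendantInvolution.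

Lemma connected_has_nbr (T : finType) (e : rel T) :
  (forall x y, connect e x y) -> 1 < #|T| -> forall x, exists y, e x y.
Proof.
move=> conn T_gt1 x.
have /card_gt0P[y] : 0 < #|[set~ x]| by rewrite cardsC1 -subn1 subn_gt0.
rewrite !inE => yx; case/connectP: (conn x y) => -[/= _ yE|z p /= /andP[xz _] _].
  by rewrite yE eqxx in yx.
by exists z.
Qed.

Section Bipartite.
Variables (T : finType) (e : rel T) (U V : {set T}).
Hypothesis UV_disj : [disjoint U & V].
Hypothesis bip :
  forall x y, e x y -> ((x \in U) && (y \in V)) || ((x \in V) && (y \in U)).

Lemma bipartite_independent : independent e V.
Proof.
apply/independentP => x y xV yV; apply/negP => /bip.
by rewrite (disjointFl UV_disj xV) (disjointFl UV_disj yV) !andbF.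
Qed.

Lemma bipartite_dominating :
  U :|: V = setT -> (forall x, exists y, e x y) ->
  forall x, x \notin V -> exists2 v, v \in V & e x v.
Proof.
move=> UV_cover nbr x xV; have [y xy] := nbr x; exists y => //.
have : x \in U :|: V by rewrite UV_cover inE.
by rewrite inE (negbTE xV) orbF => xU; move/bip: xy; rewrite xU (negbTE xV) /= orbF.
Qed.

End Bipartite.

Theorem lemma5p6 (T : finType) (e : rel T)
  (e_sym : symmetric e) (e_irr : irreflexive e)
  (G_conn : forall x y : T, connect e x y)
  (G_nontriv : 1 < #|T|)
  (U V : {set T})
  (UV_disj : [disjoint U & V]) (UV_cover : U :|: V = setT)
  (bip : forall x y, e x y -> ((x \in U) && (y \in V)) || ((x \in V) && (y \in U)))
  (UgeV : #|V| <= #|U|)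
  (UL : {set T}) (UL_sub : UL \subset U)
  (UL_leaf : forall u, u \in UL -> leaf e u)
  (UL_match : forall v, v \in VW e V -> #|[set u in UL | e v u]| = 1)
  (UL_card : #|UL| = #|VW e V|)
  (VWbar_empty : V :\: VW e V = set0) :
  (forall S : {set T}, S \subset U :\: UL -> S != set0 -> g e (U :\: UL) S = 0%R) /\
  g e (U :\: UL) set0 = (if odd #|V| then 2 else 0)%R.
Proof.
pose l v := odflt v [pick u in UL | e v u].
have l_spec : {in V, forall v, (l v \in UL) && e v (l v)}.
  move=> v vV; rewrite /l; case: pickP => [u /andP[-> ->] //|none].
  have vVW : v \in VW e V.
    by move/eqP: VWbar_empty; rewrite setD_eq0 => /subsetP; apply.
  have /card_gt0P[u] : 0 < #|[set u in UL | e v u]| by rewrite UL_match.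
  by rewrite inE none.
have sign_sum S : indep_sign_sum e (U :\: UL) S = ((S == set0)%:R * (-1) ^+ #|V|)%R.
  have VUbar : V :&: (U :\: UL) = set0.
    apply/eqP; rewrite -subset0 -(disjoint_setI0 UV_disj) setIC.
    by rewrite setSI // subsetDl.
  rewrite -VUbar; apply: (indep_sign_sum_pendant (l := l) e_sym e_irr).
  - exact: bipartite_independent UV_disj bip.
  - exact: bipartite_dominating bip UV_cover (connected_has_nbr G_conn G_nontriv).
  - by move=> v /l_spec /andP[].
  - by move=> v /l_spec /andP[/UL_leaf].
  - by move=> v /l_spec /andP[lvUL _]; rewrite inE lvUL.
split => [S _ S_neq0|]; rewrite g_indep_sign_sum sign_sum.
  by rewrite (negbTE S_neq0) mul0r subrr.
by rewrite eqxx mul1r -signr_odd; case: (odd #|V|).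
Qed.
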